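(* For DPP-TS-alt, for every round $t$ and every $b\in[3,B]$, $$\mathbb{E}\big[\sigma_{t,b}(x_{t,b})\big]\le \mathbb{E}\big[\sigma_{t,b-1}(x_{t,b-1})\big].$$
   Context: Setting: $f\sim GP(0,k)$ on a domain $\mathcal{X}$. Fix batch size $B\ge 3$ and horizon $T$. In each round $t$ an algorithm selects $x_{t,1},\dots,x_{t,B}\in\mathcal{X}$ before receiving feedback from round $t$, then observes $y_{t,b}=f(x_{t,b})+\epsilon_{t,b}$, $\epsilon_{t,b}$ i.i.d. $\mathcal N(0,\sigma^2)$ independent of $f$. Index pairs $(t,b)$ are ordered lexicographically; $D_{t,b}$ is the set of pairs $(x_{t',b'},y_{t',b'})$ with $(t',b')\le (t,b)$; $D_{t,0}:=D_{t-1,B}$, $D_{0,B}:=\emptyset$. $\sigma^2_{t,b}(x)$ is the GP posterior variance of $f(x)$ given $D_{t,b-1}$ (depending only on observed locations). $p_{\max,t}$ is the law of $\arg\max_x\tilde f(x)$ with $\tilde f$ drawn from the posterior of $f$ given $D_{t-1,B}$. DPP-TS-alt: in round $t$, $x_{t,1}\sim p_{\max,t}$; then $(x_{t,2},\dots,x_{t,B})$ are drawn jointly from the distribution on $\mathcal{X}^{B-1}$ with density, with respect to $p_{\max,t}^{\otimes(B-1)}$, proportional to $\det(I+\sigma^{-2}K^{(t)}_X)$, where $X=(x_{t,2},\dots,x_{t,B})$ and $K^{(t)}_X$ is the matrix of the GP posterior covariance of $f$ given $D_{t-1,B}$ together with an observation at $x_{t,1}$, evaluated at the points of $X$. *)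

From HB Require Import structures.
From mathcomp Require Import all_boot all_order all_algebra.
From mathcomp Require Import all_classical all_reals all_analysis.
Set Implicit Arguments. Unset Strict Implicit. Unset Printing Implicit Defensive.
Import Order.TTheory GRing.Theory Num.Theory.
Local Open Scope ring_scope.

Section GPDefs.
Context {R : realType} {d : measure_display} {X : measurableType d}.

Definition gram (k : X -> X -> R) (s : seq X) : 'M[R]_(size s) :=
  \matrix_(i, j) k (tnth (in_tuple s) i) (tnth (in_tuple s) j).

Definition kvec (k : X -> X -> R) (s : seq X) (x : X) : 'cV[R]_(size s) :=
  \col_i k (tnth (in_tuple s) i) x.

(* GP posterior covariance of f(x), f(y) given noisy observations
   (noise variance s2) at the locations s. *)
Definition post_cov (s2 : R) (k : X -> X -> R) (s : seq X) (x y : X) : R :=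
  k x y - ((kvec k s x)^T *m invmx (gram k s + s2%:M) *m kvec k s y) 0 0.

Definition post_sd (s2 : R) (k : X -> X -> R) (s : seq X) (x : X) : R :=
  Num.sqrt (post_cov s2 k s x x).

Definition dpp_weight (s2 : R) (k : X -> X -> R) (S : seq X) (x1 : X)
    (xs : seq X) : R :=
  \det (1%:M + s2^-1 *: \matrix_(i, j)
      post_cov s2 k (rcons S x1) (tnth (in_tuple xs) i) (tnth (in_tuple xs) j)).

Local Open Scope ereal_scope.

(* iterated integral w.r.t. p^{(x) n} of F over lists of length n *)
Fixpoint iint (p : {measure set X -> \bar R}) (n : nat)
    (F : seq X -> \bar R) {struct n} : \bar R :=
  match n with
  | 0 => F [::]
  | n'.+1 => \int[p]_x iint p n' (fun s => F (x :: s))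
  end.

(* Expectation of g(x_{t,1}, (x_{t,2},...,x_{t,B})) under one round of
   DPP-TS-alt, conditionally on D_{t-1,B} (locations S), when
   p = p_{max,t}: x1 ~ p, then (x2..xB) has density proportional to
   dpp_weight w.r.t. p^{(x)(B-1)}. *)
Definition round_exp (p : probability X R) (s2 : R) (k : X -> X -> R)
    (B : nat) (S : seq X) (g : X -> seq X -> R) : \bar R :=
  \int[p]_x1
    (iint p B.-1 (fun xs => (dpp_weight s2 k S x1 xs * g x1 xs)%:E) *
     ((fine (iint p B.-1 (fun xs => (dpp_weight s2 k S x1 xs)%:E)))^-1)%:E).

End GPDefs.

(* sigma_{t,b}(x_{t,b}) as a function of x_{t,1} and (x_{t,2},...,x_{t,B}):
   posterior sd given D_{t,b-1}, i.e. S ++ (x_{t,1},...,x_{t,b-1}). *)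
Definition sd_tb {R : realType} {d : measure_display} {X : measurableType d}
    (s2 : R) (k : X -> X -> R) (S : seq X) (b : nat) (x1 : X) (xs : seq X) : R :=
  post_sd s2 k (S ++ take b.-1 (x1 :: xs)) (nth x1 (x1 :: xs) b.-1).

From HB Require Import structures.
From mathcomp Require Import all_boot all_order all_algebra.
From mathcomp Require Import all_classical all_reals all_analysis.
From mathcomp Require Import fingroup perm measurable_realfun lra zify.
Import Order.TTheory GRing.Theory Num.Theory.
Local Open Scope classical_set_scope.
Local Open Scope ring_scope.

(* Fix x_{t,1} and the first b-3 points of the batch and compare the
   remaining iterated integrals.  The DPP weight det(I + K/s2) only depends on
   the batch as a multiset, so by Tonelli one may exchange x_{t,b-1} and
   x_{t,b} in the b-1 integrand.  After the exchange both standard deviations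
   are taken at the same point, sigma_{t,b} conditioned on one more
   observation; adding an observation can only decrease the posterior
   variance, since the posterior variance is the least mean squared error of a
   linear predictor and predictors from fewer points remain available.  All
   integrands are nonnegative, because det(I + N) >= 0 for positive
   semidefinite N and the posterior covariance is positive semidefinite (a
   Schur complement). *)

Section nonneg_integral.
Local Open Scope ereal_scope.
Context {d : measure_display} {T : measurableType d} {R : realType}.
Variable mu : {measure set T -> \bar R}.

Lemma le_nonneg_integral (f g : T -> \bar R) :
  (forall x, 0 <= f x) -> (forall x, f x <= g x) ->
  \int[mu]_x f x <= \int[mu]_x g x.
Proof.
move=> f0 fg; have g0 x : 0 <= g x by exact: le_trans (f0 x) (fg x).
rewrite !ge0_integralTE //; apply: ereal_sup_le => _ [h /= hf <-].
by exists h => //= x; exact: le_trans (hf x) (fg x).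
Qed.

End nonneg_integral.

Section measurable_matrix.
Context {R : realType} {d : measure_display} {Y : measurableType d}.

Lemma measurable_invr : measurable_fun [set: R] (@GRing.inv R).
Proof.
have -> : [set: R] = [set x : R | x != 0] `|` [set 0].
  by apply/seteqP; split => x //= _; case: (eqVneq x 0) => [->|h]; [right|left].
apply/measurable_funU => //.
- by apply: open_measurable; exact: open_neq.
- split; last exact: measurable_fun_set1.
  apply: open_continuous_measurable_fun; first exact: open_neq.
  by move=> x /set_mem /= x0; apply: inv_continuous.
Qed.

Definition measurable_mx {m n} (M : Y -> 'M[R]_(m, n)) :=
  forall i j, measurable_fun setT (fun y => M y i j).

Lemma measurable_mx_matrix {m n} (F : Y -> 'I_m -> 'I_n -> R) :
  (forall i j, measurable_fun setT (fun y => F y i j)) ->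
  measurable_mx (fun y => \matrix_(i, j) F y i j).
Proof. by move=> mF i j; under eq_fun do rewrite mxE; exact: mF. Qed.

Lemma measurable_mx_cst {m n} (A : 'M[R]_(m, n)) : measurable_mx (fun _ => A).
Proof. by move=> i j; exact: measurable_cst. Qed.

Lemma measurable_mxD {m n} (M N : Y -> 'M[R]_(m, n)) :
  measurable_mx M -> measurable_mx N -> measurable_mx (fun y => M y + N y).
Proof.
by move=> mM mN i j; under eq_fun do rewrite mxE; exact: measurable_funD.
Qed.

Lemma measurable_mxZ {m n} (a : R) (M : Y -> 'M[R]_(m, n)) :
  measurable_mx M -> measurable_mx (fun y => a *: M y).
Proof.
by move=> mM i j; under eq_fun do rewrite mxE; exact: measurable_funM.
Qed.

Lemma measurable_trmx {m n} (M : Y -> 'M[R]_(m, n)) :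
  measurable_mx M -> measurable_mx (fun y => (M y)^T).
Proof. by move=> mM i j; under eq_fun do rewrite mxE; exact: mM. Qed.

Lemma measurable_mulmx {m n o} (M : Y -> 'M[R]_(m, n)) (N : Y -> 'M[R]_(n, o)) :
  measurable_mx M -> measurable_mx N -> measurable_mx (fun y => M y *m N y).
Proof.
move=> mM mN i j; under eq_fun do rewrite mxE.
by apply: measurable_sum => l; exact: measurable_funM.
Qed.

Lemma measurable_det {n} (M : Y -> 'M[R]_n) :
  measurable_mx M -> measurable_fun setT (fun y => \det (M y)).
Proof.
move=> mM; apply: measurable_sum => s.
apply: measurable_funM; first exact: measurable_cst.
by apply: measurable_prod => i _; exact: mM.
Qed.

Lemma measurable_adj {n} (M : Y -> 'M[R]_n) :
  measurable_mx M -> measurable_mx (fun y => \adj (M y)).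
Proof.
move=> mM i j; under eq_fun do rewrite mxE /cofactor.
apply: measurable_funM; first exact: measurable_cst.
by apply: measurable_det => a b; under eq_fun do rewrite !mxE; exact: mM.
Qed.

Lemma measurable_invmx {n} (M : Y -> 'M[R]_n) :
  measurable_mx M -> measurable_mx (fun y => invmx (M y)).
Proof.
move=> mM i j.
have -> : (fun y => invmx (M y) i j) = (fun y =>
   if \det (M y) == 0 then M y i j else (\det (M y))^-1 * \adj (M y) i j).
  apply/funext => y; rewrite /invmx unitmxE unitfE.
  by case: eqP => _ //=; rewrite mxE.
apply: measurable_fun_ifT; last 2 first.
- exact: mM.
- apply: measurable_funM; last exact: measurable_adj.
  exact: measurableT_comp measurable_invr (measurable_det _ mM).
by apply: measurable_fun_eqr; [exact: measurable_det|exact: measurable_cst].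
Qed.

End measurable_matrix.

(* A family of lists of constant length [n], measurable coordinatewise; the
   default [x0] of [nth] is immaterial since out-of-range coordinates are
   constant. *)
Definition measurable_seq {d} {X : measurableType d}
    {d'} {Y : measurableType d'} (x0 : X) (n : nat) (Q : Y -> seq X) :=
  (forall y, size (Q y) = n) /\
  (forall i, measurable_fun setT (fun y => nth x0 (Q y) i)).

(* Joint measurability of [G] on lists of length [n], i.e. on [X^n], expressed
   through all measurable families of such lists. *)
Definition measurable_on_seq {d} {X : measurableType d} {R : realType}
    (x0 : X) (n : nat) (G : seq X -> \bar R) :=
  forall d' (Y : measurableType d') (Q : Y -> seq X),
    measurable_seq x0 n Q -> measurable_fun setT (fun y => G (Q y)).

Section measurable_seq_lemmas.
Context {d : measure_display} {X : measurableType d}.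
Context {d' : measure_display} {Y : measurableType d'}.

Lemma measurable_seq_cst (x0 : X) (l : seq X) :
  measurable_seq x0 (size l) (fun _ : Y => l).
Proof. by split => // i; exact: measurable_cst. Qed.

Lemma measurable_seq_cat {x0 : X} {Q1 Q2 n1 n2} :
  measurable_seq x0 n1 Q1 -> measurable_seq x0 n2 Q2 ->
  measurable_seq x0 (n1 + n2) (fun y : Y => Q1 y ++ Q2 y).
Proof.
case=> s1 m1 [s2 m2]; split=> [y|i]; first by rewrite size_cat s1 s2.
have -> : (fun y => nth x0 (Q1 y ++ Q2 y) i) =
   (fun y => if (i < n1)%N then nth x0 (Q1 y) i else nth x0 (Q2 y) (i - n1)).
  by apply/funext => y; rewrite nth_cat s1.
by case: (i < n1)%N.
Qed.

Lemma measurable_seq_take {x0 : X} j {Q n} : measurable_seq x0 n Q ->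
  measurable_seq x0 (minn j n) (fun y : Y => take j (Q y)).
Proof.
case=> sQ mQ; split=> [y|i]; first by rewrite size_take_min sQ.
have [ij|ji] := ltnP i j.
  by under eq_fun do rewrite nth_take //; exact: mQ.
have le_j_i := leq_trans (geq_minl j n) ji.
under eq_fun do rewrite nth_default ?size_take_min ?sQ //.
exact: measurable_cst.
Qed.

Lemma measurable_seq_rcons {x0 : X} {Q n} : measurable_seq x0 n Q ->
  measurable_seq x0 n.+1 (fun yx : Y * X => rcons (Q yx.1) yx.2).
Proof.
case=> sQ mQ; split=> [y|i]; first by rewrite size_rcons sQ.
have -> : (fun y : Y * X => nth x0 (rcons (Q y.1) y.2) i) =
  (fun y => if (i < n)%N then nth x0 (Q y.1) i else if i == n then y.2 else x0).
  by apply/funext => y; rewrite nth_rcons sQ.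
case: (i < n)%N; first exact: measurableT_comp (mQ i) measurable_fst.
by case: (i == n); [exact: measurable_snd | exact: measurable_cst].
Qed.

End measurable_seq_lemmas.

Lemma measurable_seq_swap {d} {X : measurableType d} (x0 : X) :
  measurable_seq x0 2 (fun uv : X * X => [:: uv.2; uv.1]).
Proof.
split=> // -[|[|i]] /=; [exact: measurable_snd|exact: measurable_fst|].
exact: measurable_cst.
Qed.

Section iterated_integral.
Local Open Scope ereal_scope.
Context {R : realType} {d : measure_display} {X : measurableType d}.
Variable p : probability X R.

Lemma iint_ge0 n F : (forall s, 0 <= F s) -> 0 <= iint p n F.
Proof.
elim: n F => [|n IH] F F0 /=; first exact: F0.
by apply: integral_ge0 => x _; apply: IH.
Qed.

Lemma le_iint n F G : (forall s, 0 <= F s) -> (forall s, F s <= G s) ->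
  iint p n F <= iint p n G.
Proof.
elim: n F G => [|n IH] F G F0 FG /=; first exact: FG.
by apply: le_nonneg_integral => x; [exact: iint_ge0 | exact: IH].
Qed.

Lemma le_iint_prefix j m F G : (forall s, 0 <= F s) ->
  (forall pre, size pre = j ->
    iint p m (fun s => F (pre ++ s)) <= iint p m (fun s => G (pre ++ s))) ->
  iint p (j + m) F <= iint p (j + m) G.
Proof.
elim: j F G => [|j IH] F G F0 FG /=; first exact: (FG [::]).
apply: le_nonneg_integral => x; first exact: iint_ge0.
apply: (IH (fun s => F (x :: s)) (fun s => G (x :: s))) => // pre sz_pre.
by apply: (FG (x :: pre)); rewrite /= sz_pre.
Qed.

Lemma measurable_iint x0 m d' (Y : measurableType d') (Q : Y -> seq X) n G :
  (forall s, 0 <= G s) -> measurable_seq x0 n Q ->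
  measurable_on_seq x0 (n + m) G ->
  measurable_fun setT (fun y => iint p m (fun s => G (Q y ++ s))).
Proof.
elim: m d' Y Q n => [|m IH] d' Y Q n G0 mQ mG /=.
  by under eq_fun do rewrite cats0; apply: mG; rewrite addn0.
pose f yx := iint p m (fun s => G (rcons (Q yx.1) yx.2 ++ s)).
have mf : measurable_fun setT f.
  by apply: IH (measurable_seq_rcons mQ) _ => //; rewrite addSnnS.
have f0 yx : 0 <= f yx by exact: iint_ge0.
have := @measurable_fun_fubini_tonelli_F _ _ Y X R p f mf f0.
rewrite /fubini_F /f; congr measurable_fun; apply/funext => y /=.
apply: eq_integral => x _; congr iint; apply/funext => s.
by rewrite -cats1 -catA.
Qed.

Lemma le_iint_swap x0 m (F G : seq X -> \bar R) :
  (forall s, 0 <= F s) -> (forall s, 0 <= G s) ->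
  (forall u v r, F [:: u, v & r] <= G [:: v, u & r]) ->
  measurable_on_seq x0 m.+2 G ->
  iint p m.+2 F <= iint p m.+2 G.
Proof.
move=> F0 G0 FG mG /=.
pose f uv := iint p m (fun s => G [:: uv.2, uv.1 & s]).
have mf : measurable_fun setT f.
  apply: (@measurable_iint x0 m _ _ _ 2 G G0 (measurable_seq_swap x0)).
  by rewrite add2n.
have f0 uv : 0 <= f uv by exact: iint_ge0.
rewrite -(fubini_tonelli f mf f0) /=.
apply: le_nonneg_integral => u.
  by apply: integral_ge0 => v _; exact: iint_ge0.
apply: le_nonneg_integral => v; first exact: iint_ge0.
exact: le_iint.
Qed.

End iterated_integral.

Section matrix_entries.
Context {V : zmodType} {m n : nat}.

Lemma addmxE (A B : 'M[V]_(m, n)) i j : (A + B) i j = A i j + B i j.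
Proof. exact: mxE. Qed.

Lemma oppmxE (A : 'M[V]_(m, n)) i j : (- A) i j = - A i j.
Proof. exact: mxE. Qed.

End matrix_entries.

Section psd_matrix.
Context {R : realFieldType}.

Definition psdmx {n} (A : 'M[R]_n) :=
  forall c : 'cV_n, 0 <= (c^T *m A *m c) 0 0.

Lemma sqnormmx_ge0 n (c : 'cV[R]_n) : 0 <= (c^T *m c) 0 0.
Proof.
rewrite mxE; apply: sumr_ge0 => i _; rewrite mxE -expr2; exact: sqr_ge0.
Qed.

Lemma sqnormmx_gt0 n (c : 'cV[R]_n) : c != 0 -> 0 < (c^T *m c) 0 0.
Proof.
move=> cn0; have [i ci] : exists i, c i 0 != 0.
  apply/existsP; apply: contraR cn0 => /existsPn c0.
  by apply/eqP/matrixP => a b; rewrite mxE (ord1 b); exact/eqP/negbNE/c0.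
rewrite mxE (bigD1 i) //= mxE -expr2; apply: ltr_pwDl.
  by rewrite lt_def sqr_ge0 andbT sqrf_eq0.
by apply: sumr_ge0 => j _; rewrite mxE -expr2; exact: sqr_ge0.
Qed.

Lemma trmx_mul_colE n (c b : 'cV[R]_n) : (c^T *m b) 0 0 = \sum_i c i 0 * b i 0.
Proof. by rewrite mxE; apply: eq_bigr => i _; rewrite mxE. Qed.

Lemma tr_mulmxC {n} (a b : 'cV[R]_n) : (a^T *m b) 0 0 = (b^T *m a) 0 0.
Proof. by rewrite -[in RHS](trmxK a) -trmx_mul [RHS]mxE. Qed.

Lemma bilinear_mxE n (c e : 'cV[R]_n) (A : 'M[R]_n) :
  (c^T *m A *m e) 0 0 = \sum_i \sum_j c i 0 * A i j * e j 0.
Proof.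
rewrite mxE; under eq_bigr do rewrite mxE big_distrl /=.
rewrite exchange_big; apply: eq_bigr => i _; apply: eq_bigr => j _.
by rewrite mxE.
Qed.

Lemma coercive_unitmx n (A : 'M[R]_n) (e : R) : 0 < e ->
  (forall c : 'cV_n, e * (c^T *m c) 0 0 <= (c^T *m A *m c) 0 0) ->
  A \in unitmx.
Proof.
move=> e0 eA; rewrite unitmxE unitfE; apply/negP => /det0P [v vn0 vA].
have := eA v^T; rewrite trmxK vA mul0mx [X in _ <= X]mxE leNgt => /negP; apply.
rewrite mulr_gt0 // -[X in X *m _]trmxK sqnormmx_gt0 //.
by apply: contra vn0 => /eqP/(congr1 trmx); rewrite trmxK trmx0 => ->.
Qed.

End psd_matrix.

(* [det (1 + t N)] is a polynomial in [t] that cannot vanish on [[0, 1]],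
   since [1 + t N] is coercive there; it equals [1] at [t = 0]. *)
Lemma det1D_psd_ge0 (R : rcfType) m (N : 'M[R]_m) :
  psdmx N -> 0 <= \det (1%:M + N).
Proof.
move=> psdN.
pose q := \det (\matrix_(i, j) (((1%:M : 'M[R]_m) i j)%:P + 'X * (N i j)%:P)).
have qE t : q.[t] = \det (1%:M + t *: N).
  rewrite -horner_evalE /q -det_map_mx; congr (\det _).
  by apply/matrixP => i j; rewrite !mxE /= horner_evalE !hornerE.
have q_neq0 t : 0 <= t -> \det (1%:M + t *: N) != 0.
  move=> t0; rewrite -unitfE -unitmxE.
  apply: (@coercive_unitmx _ _ _ 1 ltr01) => c.
  rewrite mul1r mulmxDr mulmx1 mulmxDl [X in _ <= X]mxE -scalemxAr -scalemxAl.
  by rewrite [X in _ <= _ + X]mxE lerDl mulr_ge0.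
rewrite leNgt; apply/negP => det_lt0.
have [x /andP[x0 _]] : exists2 x, 0 <= x <= 1 & root (- q) x.
  apply: poly_ivt; first exact: ler01.
  rewrite !hornerN !qE scale0r addr0 det1 scale1r oppr_le0 ler01 /=.
  by rewrite oppr_ge0 ltW.
by rewrite rootN /root qE (negPf (q_neq0 _ x0)).
Qed.

Section gp_posterior.
Context {R : realFieldType} {T : Type} (k : T -> T -> R) (s2 : R).

Definition gramn n (P : nat -> T) : 'M[R]_n := \matrix_(i, j) k (P i) (P j).
Definition noisy_gram n P : 'M[R]_n := gramn n P + s2%:M.
Definition kcoln n (P : nat -> T) v : 'cV[R]_n := \col_i k (P i) v.
Definition pcovn n P u v :=
  k u v - ((kcoln n P u)^T *m invmx (noisy_gram n P) *m kcoln n P v) 0 0.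

(* Mean squared error of the linear predictor [c^T y] of [f v] from the noisy
   observations [y] at [P 0, ..., P (n-1)]. *)
Definition pred_err n P v (c : 'cV[R]_n) :=
  k v v - 2 * (c^T *m kcoln n P v) 0 0 + (c^T *m noisy_gram n P *m c) 0 0.

Definition extcol {n} (c : 'cV[R]_n) : 'cV[R]_n.+1 :=
  \col_i oapp (fun j : 'I_n => c j 0) 0 (insub (i : nat)).

Hypothesis ksym : forall x y, k x y = k y x.
Hypothesis kpsd :
  forall n (xs : 'I_n -> T), psdmx (\matrix_(i, j) k (xs i) (xs j)).
Hypothesis s2_gt0 : 0 < s2.

Lemma noisy_gram_quad n P (c : 'cV_n) :
  (c^T *m noisy_gram n P *m c) 0 0 =
  (c^T *m gramn n P *m c) 0 0 + s2 * (c^T *m c) 0 0.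
Proof.
rewrite /noisy_gram mulmxDr mul_mx_scalar mulmxDl -scalemxAl.
by rewrite [LHS]mxE [X in _ + X = _]mxE.
Qed.

Lemma noisy_gram_psd n P : psdmx (noisy_gram n P).
Proof.
move=> c; rewrite noisy_gram_quad; apply: addr_ge0.
  exact: (kpsd _ (fun i : 'I_n => P i) c).
by apply: mulr_ge0; [exact: ltW | exact: sqnormmx_ge0].
Qed.

Lemma noisy_gram_unit n P : noisy_gram n P \in unitmx.
Proof.
apply: (@coercive_unitmx _ _ _ _ s2_gt0) => c.
by rewrite noisy_gram_quad lerDr; exact: (kpsd _ (fun i : 'I_n => P i) c).
Qed.

Lemma noisy_gram_tr n P : (noisy_gram n P)^T = noisy_gram n P.
Proof.
rewrite /noisy_gram linearD /= tr_scalar_mx; congr (_ + _).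
by apply/matrixP => i j; rewrite !mxE ksym.
Qed.

Lemma noisy_gram_solve n P (b : 'cV_n) :
  noisy_gram n P *m (invmx (noisy_gram n P) *m b) = b.
Proof. by rewrite mulmxA mulmxV ?mul1mx //; exact: noisy_gram_unit. Qed.

Lemma noisy_gram_solve_tr n P (b : 'cV_n) :
  (invmx (noisy_gram n P) *m b)^T *m noisy_gram n P = b^T.
Proof. by rewrite -[X in _ *m X]noisy_gram_tr -trmx_mul noisy_gram_solve. Qed.

(* Completing the square around [a = K^-1 b]. *)
Lemma pcov_le_pred_err n P v c : pcovn n P v v <= pred_err n P v c.
Proof.
set K := noisy_gram n P; set b := kcoln n P v; set a := invmx K *m b.
have := noisy_gram_psd n P (c - a).
rewrite [(c - a)^T]linearB /= !mulmxBl !mulmxBr noisy_gram_solve_tr.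
rewrite -[c^T *m K *m a]mulmxA noisy_gram_solve.
rewrite /pred_err /pcovn -/K -/b -[b^T *m invmx K *m b]mulmxA -/a.
rewrite !(addmxE, oppmxE) (tr_mulmxC b c).
lra.
Qed.

Lemma pcov_pred_errE n P v :
  pcovn n P v v = pred_err n P v (invmx (noisy_gram n P) *m kcoln n P v).
Proof.
set K := noisy_gram n P; set b := kcoln n P v; set a := invmx K *m b.
rewrite /pred_err -/K -/b -mulmxA noisy_gram_solve /pcovn -/K -/b.
rewrite -[b^T *m invmx K *m b]mulmxA -/a (tr_mulmxC a b); lra.
Qed.

Lemma pred_err_extcol n P P' v (c : 'cV_n) :
  (forall i, (i < n)%N -> P' i = P i) ->
  pred_err n.+1 P' v (extcol c) = pred_err n P v c.
Proof.
move=> PP'.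
have cE (j : 'I_n) : extcol c (widen_ord (leqnSn n) j) 0 = c j 0.
  by rewrite mxE /= valK.
have c_max : extcol c ord_max 0 = 0 by rewrite mxE insubF ?ltnn.
have KE (i j : 'I_n) : noisy_gram n.+1 P' (widen_ord (leqnSn n) i)
    (widen_ord (leqnSn n) j) = noisy_gram n P i j.
  by rewrite !mxE -!val_eqE /= !PP' ?ltn_ord.
rewrite /pred_err !trmx_mul_colE !bilinear_mxE; congr (_ - 2 * _ + _).
  rewrite big_ord_recr /= c_max mul0r addr0; apply: eq_bigr => j _.
  by rewrite cE !mxE /= PP' ?ltn_ord.
rewrite big_ord_recr /= [X in _ + X]big1 => [|j _]; last first.
  by rewrite c_max !mul0r.
rewrite addr0; apply: eq_bigr => i _.
rewrite big_ord_recr /= c_max mulr0 addr0; apply: eq_bigr => j _.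
by rewrite !cE KE.
Qed.

Lemma pcov_widen_le n P P' v : (forall i, (i < n)%N -> P' i = P i) ->
  pcovn n.+1 P' v v <= pcovn n P v v.
Proof.
move=> PP'; rewrite [leRHS]pcov_pred_errE -(@pred_err_extcol n P P' v _ PP').
exact: pcov_le_pred_err.
Qed.

(* The posterior covariance is the Schur complement of the noisy Gram matrix
   in the Gram matrix of the points [P] followed by the points [Q]. *)
Lemma pcov_psd n P m (Q : 'I_m -> T) :
  psdmx (\matrix_(i, j) pcovn n P (Q i) (Q j)).
Proof.
move=> c.
pose Bm : 'M[R]_(n, m) := \matrix_(l, i) k (P l) (Q i).
pose Kx : 'M[R]_m := \matrix_(i, j) k (Q i) (Q j).
set K := noisy_gram n P.
have pcovE : \matrix_(i, j) pcovn n P (Q i) (Q j) = Kx - Bm^T *m invmx K *m Bm.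
  apply/matrixP => i j; rewrite !mxE; congr (_ - _).
  rewrite !mxE; apply: eq_bigr => l _; rewrite !mxE; congr (_ * _).
  by apply: eq_bigr => l' _; rewrite !mxE.
set b := Bm *m c; set a := invmx K *m b.
pose J (i : 'I_(n + m)) :=
  match fintype.split i with inl l => P l | inr j => Q j end.
have JE : \matrix_(i, j) k (J i) (J j) = block_mx (gramn n P) Bm Bm^T Kx.
  apply/matrixP => i j; rewrite mxE -(splitK i) -(splitK j) /J !unsplitK.
  case: (fintype.split i) => i'; case: (fintype.split j) => j' /=;
    by rewrite ?block_mxEul ?block_mxEur ?block_mxEdl ?block_mxEdr !mxE.
have := kpsd _ J (col_mx (- a) c); rewrite JE.
rewrite tr_col_mx mul_row_block mul_row_col [(- a)^T]linearN /= !mulNmx.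
rewrite !mulmxDl !mulNmx !mulmxN.
have cB : c^T *m Bm^T = b^T by rewrite -trmx_mul.
rewrite cB -[a^T *m Bm *m c]mulmxA -/b.
have := noisy_gram_quad n P a; rewrite -/K noisy_gram_solve_tr.
have : 0 <= s2 * (a^T *m a) 0 0.
  by apply: mulr_ge0; [exact: ltW | exact: sqnormmx_ge0].
have -> : c^T *m (\matrix_(i, j) pcovn n P (Q i) (Q j)) *m c
    = c^T *m Kx *m c - b^T *m a.
  by rewrite pcovE mulmxBr mulmxBl !mulmxA cB -!mulmxA.
rewrite !(addmxE, oppmxE) (tr_mulmxC a b).
lra.
Qed.

End gp_posterior.

Section posterior_of_seq.
Context {R : realType} {d : measure_display} {X : measurableType d}.
Variables (k : X -> X -> R) (s2 : R).

Lemma post_covE x0 (L : seq X) u v :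
  post_cov s2 k L u v = pcovn k s2 (size L) (nth x0 L) u v.
Proof.
rewrite /post_cov /pcovn /noisy_gram /gramn /kcoln.
have -> : gram k L = \matrix_(i, j) k (nth x0 L i) (nth x0 L j).
  by apply/matrixP => i j; rewrite !mxE !(tnth_nth x0).
have kvecE w : kvec k L w = \col_i k (nth x0 L i) w.
  by apply/matrixP => i j; rewrite !mxE !(tnth_nth x0).
by rewrite !kvecE.
Qed.

Lemma dpp_weightE x0 S x1 (xs : seq X) m : size xs = m ->
  dpp_weight s2 k S x1 xs = \det (1%:M + s2^-1 *: \matrix_(i, j < m)
      post_cov s2 k (rcons S x1) (nth x0 xs i) (nth x0 xs j)).
Proof.
move=> <-; rewrite /dpp_weight; congr (\det (_ + _ *: _)).
by apply/matrixP => i j; rewrite !mxE !(tnth_nth x0).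
Qed.

Lemma dpp_weight_perm S x1 xs ys :
  perm_eq ys xs -> dpp_weight s2 k S x1 ys = dpp_weight s2 k S x1 xs.
Proof.
move=> ys_xs; have /tuple_permP[p ysE] : perm_eq ys (in_tuple xs) := ys_xs.
have sz : size ys = size xs by rewrite ysE size_tuple.
have ys_nth (i : 'I_(size xs)) : nth x1 ys i = nth x1 xs (p i).
  by rewrite ysE -tnth_nth tnth_mktuple (tnth_nth x1).
rewrite (dpp_weightE x1 S x1 ys _ sz) (dpp_weightE x1 S x1 xs _ erefl).
set W1 := 1%:M + _; set W2 := 1%:M + _.
suff -> : W1 = row_perm p (col_perm p W2).
  rewrite row_permE col_permE !det_mulmx !det_perm odd_permV.
  by rewrite mulrCA -expr2 sqrr_sign mulr1.
by apply/matrixP => i j; rewrite !mxE (inj_eq perm_inj) !ys_nth.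
Qed.

Hypothesis ksym : forall x y, k x y = k y x.
Hypothesis kpsd :
  forall n (xs : 'I_n -> X), psdmx (\matrix_(i, j) k (xs i) (xs j)).
Hypothesis s2_gt0 : 0 < s2.

Lemma post_cov_rcons_le L u v :
  post_cov s2 k (rcons L u) v v <= post_cov s2 k L v v.
Proof.
rewrite !(post_covE v) size_rcons.
by apply: (pcov_widen_le _ _ ksym kpsd s2_gt0) => i iL; rewrite nth_rcons iL.
Qed.

Lemma dpp_weight_ge0 S x1 xs : 0 <= dpp_weight s2 k S x1 xs.
Proof.
rewrite (dpp_weightE x1 S x1 xs _ erefl).
set L := rcons S x1.
have -> : \matrix_(i, j < size xs) post_cov s2 k L (nth x1 xs i) (nth x1 xs j) =
    \matrix_(i, j) pcovn k s2 (size L) (nth x1 L) (nth x1 xs i) (nth x1 xs j).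
  by apply/matrixP => i j; rewrite !mxE (post_covE x1).
apply: det1D_psd_ge0 => c; rewrite -scalemxAr -scalemxAl mxE.
apply: mulr_ge0; first by rewrite invr_ge0 ltW.
exact: (pcov_psd _ _ ksym kpsd s2_gt0 _ _ _
  (fun i : 'I_(size xs) => nth x1 xs i)).
Qed.

Lemma sd_tb_le_swap S x1 b pre u v r : (size pre).+3 = b ->
  sd_tb s2 k S b x1 (pre ++ [:: u, v & r]) <=
  sd_tb s2 k S b.-1 x1 (pre ++ [:: v, u & r]).
Proof.
move=> <-; rewrite /sd_tb /= take_cat ltnNge leqnSn /= subSnn /=.
rewrite take_size_cat //.
rewrite !nth_cat ltnn ltnNge leqnSn /= subnn subSnn /=.
rewrite /post_sd; apply: ler_wsqrtr.
have -> : S ++ x1 :: pre ++ [:: u] = rcons (S ++ x1 :: pre) u.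
  by rewrite rcons_cat /= cats1.
exact: post_cov_rcons_le.
Qed.

End posterior_of_seq.

Section gp_measurable.
Context {R : realType} {d : measure_display} {X : measurableType d}.
Variables (k : X -> X -> R) (s2 : R).
Hypothesis mk : measurable_fun setT (fun xy : X * X => k xy.1 xy.2).
Context {d' : measure_display} {Y : measurableType d'}.

Let measurable_k (a b : Y -> X) :
  measurable_fun setT a -> measurable_fun setT b ->
  measurable_fun setT (fun y => k (a y) (b y)).
Proof.
by move=> ma mb; exact: measurableT_comp mk (measurable_fun_pair ma mb).
Qed.

Lemma measurable_post_cov x0 (A : Y -> seq X) n (u v : Y -> X) :
  measurable_seq x0 n A -> measurable_fun setT u -> measurable_fun setT v ->
  measurable_fun setT (fun y => post_cov s2 k (A y) (u y) (v y)).
Proof.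
case=> sA mA mu mv; under eq_fun do rewrite (post_covE k s2 x0) sA.
apply: measurable_funB; first exact: measurable_k.
have mcol w : measurable_fun setT w ->
    measurable_mx (fun y => kcoln k n (nth x0 (A y)) (w y)).
  by move=> mw; apply: measurable_mx_matrix => i j; exact: measurable_k.
have mK : measurable_mx (fun y => invmx (noisy_gram k s2 n (nth x0 (A y)))).
  apply/measurable_invmx/measurable_mxD; last exact: measurable_mx_cst.
  by apply: measurable_mx_matrix => i j; exact: measurable_k.
apply: (measurable_mulmx _ _ _ (mcol _ mv)).
exact: measurable_mulmx (measurable_trmx _ (mcol _ mu)) mK.
Qed.

Lemma measurable_dpp_weight x0 S x1 (L : Y -> seq X) m :
  measurable_seq x0 m L ->
  measurable_fun setT (fun y => dpp_weight s2 k S x1 (L y)).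
Proof.
move=> [sL mL]; under eq_fun do rewrite (dpp_weightE k s2 x0 _ _ _ _ (sL _)).
apply/measurable_det/measurable_mxD; first exact: measurable_mx_cst.
apply/measurable_mxZ/measurable_mx_matrix => i j.
exact: measurable_post_cov (measurable_seq_cst x0 _) (mL _) (mL _).
Qed.

Lemma measurable_sd_tb S b x1 (Q : Y -> seq X) n : measurable_seq x1 n Q ->
  measurable_fun setT (fun y => sd_tb s2 k S b x1 (Q y)).
Proof.
move=> mQ; apply: measurableT_comp.
  by apply: continuous_measurable_fun; exact: sqrt_continuous.
have mQ1 := measurable_seq_cat (measurable_seq_cst x1 [:: x1]) mQ.
have mA := measurable_seq_cat (measurable_seq_cst x1 S)
  (measurable_seq_take b.-1 mQ1).
exact: measurable_post_cov mA (mQ1.2 _) (mQ1.2 _).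
Qed.

End gp_measurable.

Theorem lemma7 (R : realType) (d : measure_display) (X : measurableType d)
    (k : X -> X -> R) (s2 : R) (B T t : nat) (S : seq X)
    (p : probability X R) (b : nat) :
  (forall x y, k x y = k y x) ->
  (forall (n : nat) (xs : 'I_n -> X) (c : 'cV[R]_n),
      0 <= (c^T *m (\matrix_(i, j) k (xs i) (xs j)) *m c) 0 0) ->
  measurable_fun setT (fun xy : X * X => k xy.1 xy.2) ->
  0 < s2 ->
  (3 <= B)%N -> (1 <= t <= T)%N -> size S = (t.-1 * B)%N ->
  (forall x1, (iint p B.-1 (fun xs => (dpp_weight s2 k S x1 xs)%:E) < +oo)%E) ->
  (3 <= b <= B)%N ->
  (round_exp p s2 k B S (sd_tb s2 k S b)
     <= round_exp p s2 k B S (sd_tb s2 k S b.-1))%E.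
Proof.
move=> ksym kpsd mk s2_gt0 _ _ _ _ /andP[b3 bB].
have w0 := dpp_weight_ge0 _ _ ksym kpsd s2_gt0 S.
have F0 c x1 xs : (0 <= (dpp_weight s2 k S x1 xs * sd_tb s2 k S c x1 xs)%:E)%E.
  by rewrite lee_fin mulr_ge0 // sqrtr_ge0.
have Z0 x1 :
  (0 <= (fine (iint p B.-1 (fun xs => (dpp_weight s2 k S x1 xs)%:E)))^-1%:E)%E.
  by rewrite lee_fin invr_ge0 fine_ge0 // iint_ge0 // => xs; rewrite lee_fin.
apply: le_nonneg_integral => x1; first by rewrite mule_ge0 // iint_ge0.
apply: lee_wpmul2r => //.
have -> : B.-1 = ((b - 3) + (B - b).+2)%N by lia.
apply: le_iint_prefix => [//|pre sz_pre].
apply: (le_iint_swap p x1) => [//|//|u v r|d' Y Q mQ].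
  have -> : dpp_weight s2 k S x1 (pre ++ [:: v, u & r]) =
            dpp_weight s2 k S x1 (pre ++ [:: u, v & r]).
    apply: dpp_weight_perm; rewrite perm_cat2l.
    by apply/seq.permP => a /=; rewrite addnCA.
  by rewrite lee_fin ler_wpM2l // sd_tb_le_swap //; lia.
have mpQ := measurable_seq_cat (measurable_seq_cst x1 pre) mQ.
apply/measurable_EFinP/measurable_funM.
  exact: measurable_dpp_weight mpQ.
exact: measurable_sd_tb mpQ.
Qed.
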